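(* Let $k$ be an algebraically closed field of characteristic $0$. For every $\mu\in k$, every integer $m\ge2$, every $s\ge0$, integers $m_1,\dots,m_s\ge1$ and $\lambda_1,\dots,\lambda_s\in k^\times$, there exists a $k$-valued pseudocharacter $\alpha$ of $\mathrm{Cob}_2$ with $$Z_\alpha(T)=\mu+mT+\sum_{i=1}^s\frac{m_i\lambda_i^{-1}}{1-\lambda_iT}.$$
   Context: $\mathrm{Cob}_2$ is the rigid symmetric monoidal category of oriented two-dimensional cobordisms between closed oriented one-manifolds, with unit the empty manifold $\emptyset$. An evaluation is a monoid homomorphism $\alpha:\mathrm{End}_{\mathrm{Cob}_2}(\emptyset)\to k$ ($\alpha(\emptyset)=1$, multiplicative on disjoint unions); it is determined by $\alpha_g:=\alpha(S_g)$, $S_g$ the closed connected oriented genus-$g$ surface, and $Z_\alpha(T)=\sum_{g\ge0}\alpha_gT^g$ (rational functions identified with their expansions at $T=0$). Extend $\alpha$ linearly. For an object $N$ and $n\ge1$, $e^-_{N,n}=\sum_{\sigma\in S_n}\mathrm{sgn}(\sigma)\sigma\in k\,\mathrm{End}(N^{\sqcup n})$ via permutation cobordisms; $\mathrm{cl}(f)$ denotes the closure (categorical trace) of an endomorphism $f$. $\deg_\alpha(N)$ is the least $d\ge0$ with $\alpha(\mathrm{cl}(h\circ e^-_{N,d+1}))=0$ for all $h\in\mathrm{End}_{\mathrm{Cob}_2}(N^{\sqcup(d+1)})$ ($\infty$ if none); $\alpha$ is a pseudocharacter of $\mathrm{Cob}_2$ if $\deg_\alpha(N)<\infty$ for every object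 $N$. *)

From HB Require Import structures.
From mathcomp Require Import all_boot all_order all_algebra all_fingroup.
Set Implicit Arguments. Unset Strict Implicit. Unset Printing Implicit Defensive.
Import GRing.Theory.
Local Open Scope ring_scope.

(* An endomorphism h of a disjoint union of circles indexed by a finite type I
   is (up to diffeomorphism rel boundary) given by:
   - c connected components, indexed by 'I_c,
   - a genus  gen x  for each component x,
   - for each input circle i the component  inp i  containing it,
   - for each output circle j the component outp j containing it.
   (Components hit by no boundary circle are closed components of h.)

   Precomposing with the permutation cobordism of tau (input i joined to
   output tau i) and closing up glues output j of h to input (tau j) of h.
   The resulting closed surface has one connected component per class of the
   equivalence relation generated by the gluing edges, and a class B with
   e_B gluing edges has genus  sum_{x in B} gen x + e_B - #|B| + 1  (Euler
   characteristic). *)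

Definition glue_rel (I : finType) (c : nat) (inp outp : I -> 'I_c)
  (tau : I -> I) : rel 'I_c :=
  fun x y => [exists j, ((outp j == x) && (inp (tau j) == y))
                     || ((outp j == y) && (inp (tau j) == x))].

Definition comp_genus (I : finType) (c : nat) (gen : 'I_c -> nat)
  (outp : I -> 'I_c) (B : {set 'I_c}) : nat :=
  ((\sum_(x in B) gen x) + #|[set j | outp j \in B]| + 1 - #|B|)%N.

(* alpha (cl (h o tau)) for an evaluation alpha given by alpha g = alpha(S_g),
   multiplicative on disjoint unions (empty product = alpha(empty) = 1). *)
Definition closure_eval (k : comNzRingType) (alpha : nat -> k) (I : finType)
  (c : nat) (gen : 'I_c -> nat) (inp outp : I -> 'I_c) (tau : I -> I) : k :=
  \prod_(B in equivalence_partition (connect (glue_rel inp outp tau)) [set: 'I_c])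
     alpha (comp_genus gen outp B).

(* The permutation cobordism of N^{d} (N = n circles) associated with s in S_d
   permutes the d blocks of n circles. *)
Definition block_perm (d n : nat) (s : 'S_d) : 'I_d * 'I_n -> 'I_d * 'I_n :=
  fun j => (s j.1, j.2).

(* alpha(cl(h o e^-_{N,d+1})) for N = n circles and h an endomorphism of
   N^{(d+1)} (circles indexed by 'I_(d+1) * 'I_n). *)
Definition antisym_trace (k : comNzRingType) (alpha : nat -> k) (n d c : nat)
  (gen : 'I_c -> nat) (inp outp : 'I_d.+1 * 'I_n -> 'I_c) : k :=
  \sum_(s : 'S_d.+1) (-1) ^+ odd_perm s * closure_eval alpha gen inp outp (block_perm s).

(* deg_alpha(N) < oo for every object N (= n circles). *)
Definition pseudocharacter (k : comNzRingType) (alpha : nat -> k) : Prop :=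
  forall n : nat, exists d : nat,
    forall (c : nat) (gen : 'I_c -> nat) (inp outp : 'I_d.+1 * 'I_n -> 'I_c),
      antisym_trace alpha gen inp outp = 0.

From HB Require Import structures.
From mathcomp Require Import all_boot all_order all_algebra all_fingroup.
From mathcomp Require Import zify ring.
Import GRing.Theory.
Local Open Scope ring_scope.

Set Implicit Arguments. Unset Strict Implicit. Unset Printing Implicit Defensive.

(* Let eps be an additive functional on a commutative ring A and (b_a, b'_a),
   a in S, a copairing for (u, v) |-> eps (u v), i.e.
   sum_a eps (u b_a) eps (b'_a v) = eps (u v); let h = sum_a b_a b'_a.
   Then alpha_g := eps (h^g) evaluates the closure of a cobordism as a state
   sum over labellings of its gluing circles by S: a circle labelled a puts
   b_a on the component it leaves and b'_a on the one it enters.  Summing out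
   one label at a time, the copairing merges two components, or, when both
   ends lie on the same component, inserts h, i.e. adds a handle.
   This alpha is a pseudocharacter: for N = n circles and d = |S|^n, every
   labelling of the d + 1 blocks of N^(d+1) repeats some block, and the
   transposition of two equal blocks fixes the labelling but flips the sign,
   so the antisymmetriser kills every term.
   The prescribed Z_alpha comes from A = k[X] x k^T with
   eps (p, f) = mu p_0 + p_(m-1) + sum_t w_t f_t: the polynomial part has
   h = X^(m-1) (m - mu X^(m-1)), giving mu + m T, and each of the m_i points
   of weight lambda_i^-1 with h-value lambda_i gives lambda_i^(g-1). *)

Lemma setU1_ind (T : finType) (P : {set T} -> Prop) :
  P set0 -> (forall x (D : {set T}), x \notin D -> P D -> P (x |: D)) ->
  forall D, P D.
Proof.
move=> P0 PU1 D; elim: {D}#|D| {-2}D (erefl #|D|) => [|n IHn] D cardD.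
  by rewrite (cards0_eq cardD).
have /set0Pn[x Dx] : D != set0 by apply: contra_eqN cardD => /eqP->; rewrite cards0.
rewrite -(setD1K Dx); apply: PU1; first by rewrite setD11.
by apply: IHn; move: cardD; rewrite (cardsD1 x) Dx add1n => -[].
Qed.

Section Components.
Local Close Scope ring_scope.
Variables (V I : finType) (src dst : I -> V).
Implicit Types (D : {set I}) (B : {set V}).

Definition edge_rel D : rel V := fun x y =>
  [exists j in D, ((src j == x) && (dst j == y)) || ((src j == y) && (dst j == x))].

Lemma edge_rel_sym D : symmetric (edge_rel D).
Proof.
by move=> x y; apply/existsP/existsP => -[j /andP[jD E]]; exists j; rewrite jD orbC.
Qed.

Lemma connect_edge_sym D : connect_sym (edge_rel D).
Proof. exact/sym_connect_sym/edge_rel_sym. Qed.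

Definition comp D z : {set V} := [set y | connect (edge_rel D) z y].

Definition comps D := equivalence_partition (connect (edge_rel D)) [set: V].

Definition nedges_from D B : nat := \sum_(j in D) (src j \in B).

Lemma compsE D : comps D = [set comp D z | z in [set: V]].
Proof. by apply: eq_imset => z; apply/setP => y; rewrite !inE. Qed.

Lemma mem_comp D z y : (y \in comp D z) = connect (edge_rel D) z y.
Proof. by rewrite inE. Qed.

Lemma comp_id D z : z \in comp D z.
Proof. by rewrite mem_comp connect0. Qed.

Lemma eq_comp D z w : (comp D z == comp D w) = connect (edge_rel D) z w.
Proof.
apply/eqP/idP => [Ezw|Czw]; first by rewrite -mem_comp Ezw comp_id.
by apply/setP => y; rewrite !mem_comp (same_connect (connect_edge_sym D) Czw).
Qed.

Lemma comp_in_comps D z : comp D z \in comps D.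
Proof. by rewrite compsE imset_f ?inE. Qed.

Lemma compsP D B : B \in comps D -> exists z, B = comp D z.
Proof. by rewrite compsE => /imsetP[z _ ->]; exists z. Qed.

Lemma comps_mem D B z : B \in comps D -> z \in B -> B = comp D z.
Proof. by move=> /compsP[w ->] Cwz; apply/eqP; rewrite eq_comp -mem_comp. Qed.

Lemma comps_memN D B z : B \in comps D -> B != comp D z -> z \notin B.
Proof. by move=> PB; apply: contraNN => /(comps_mem PB)->. Qed.

Lemma comps_set0 : comps set0 = [set [set z] | z in [set: V]].
Proof.
rewrite compsE; apply: eq_imset => z; apply/setP => y; rewrite mem_comp inE.
apply/idP/eqP => [|->]; last exact: connect0.
by case/connectP => -[_ ->|w p] //= /andP[/existsP[j]]; rewrite inE.
Qed.

Section AddEdge.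
Variables (j0 : I) (D0 : {set I}).
Let x0 := src j0.
Let y0 := dst j0.
Let r := edge_rel D0.
Let M := comp D0 x0 :|: comp D0 y0.

Lemma edge_rel_setU1 x y :
  edge_rel (j0 |: D0) x y =
    r x y || ((x0 == x) && (y0 == y)) || ((x0 == y) && (y0 == x)).
Proof.
rewrite -orbA; apply/existsP/orP => [[j]|[/existsP[j /andP[jD E]]|E]].
- rewrite in_setU1 => /andP[/predU1P[-> //|jD] E]; first by right.
  by left; apply/existsP; exists j; rewrite jD.
- by exists j; rewrite in_setU1 jD orbT.
- by exists j0; rewrite in_setU1 eqxx.
Qed.

Lemma connect_sub_setU1 x y : connect r x y -> connect (edge_rel (j0 |: D0)) x y.
Proof. by apply: connect_sub => u w Ruw; rewrite connect1 // edge_rel_setU1 Ruw. Qed.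

Lemma mem_merged z : (z \in M) = connect r x0 z || connect r y0 z.
Proof. by rewrite in_setU !mem_comp. Qed.

Lemma connect_setU1 z y :
  connect (edge_rel (j0 |: D0)) z y = connect r z y || (z \in M) && (y \in M).
Proof.
set r' := edge_rel (j0 |: D0).
have sym' := connect_edge_sym (j0 |: D0); have sym := connect_edge_sym D0.
have r'_M w : w \in M -> connect r' w x0.
  have C'yx : connect r' y0 x0 by rewrite sym' connect1 // edge_rel_setU1 !eqxx orbT.
  rewrite mem_merged => /orP[] Cw; rewrite -/r sym in Cw.
    exact: connect_sub_setU1.
  exact: connect_trans (connect_sub_setU1 Cw) C'yx.
apply/idP/orP => [C'zy|[/connect_sub_setU1 //|/andP[/r'_M Czx /r'_M Cyx]]]; last first.
  by rewrite (connect_trans Czx) // sym'.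
pose a := [pred w | connect r z w || (z \in M) && (w \in M)].
suff cl_a : closed r' a.
  have := closed_connect cl_a C'zy.
  by rewrite [z \in a]inE [y \in a]inE /= connect0 => /esym/orP.
apply: intro_closed => // u w.
rewrite /r' edge_rel_setU1 -orbA [u \in a]inE [w \in a]inE /=.
case/orP => [Ruw|E].
  case/orP => [Czu|/andP[-> uM]]; first by rewrite (connect_trans Czu (connect1 Ruw)).
  move: uM; rewrite !mem_merged => /orP[] Cu.
    by rewrite (connect_trans Cu (connect1 Ruw)) orbT.
  by rewrite (connect_trans Cu (connect1 Ruw)) !orbT.
have wM : w \in M.
  rewrite mem_merged.
  by case/orP: E => [/andP[_ /eqP<-]|/andP[/eqP<- _]]; rewrite connect0 ?orbT.
rewrite wM andbT => /orP[Czu|/andP[-> _]]; rewrite ?orbT // mem_merged.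
case/orP: E => /andP[/eqP Ex /eqP Ey]; subst u.
  by rewrite sym in Czu; rewrite Czu orbT.
by rewrite sym in Czu; rewrite Czu !orbT.
Qed.

Let Bx := comp D0 x0.
Let By := comp D0 y0.

Lemma mem_merged_x0 : x0 \in M.
Proof. by rewrite mem_merged connect0. Qed.

Lemma comp_setU1 z : comp (j0 |: D0) z = if z \in M then M else comp D0 z.
Proof.
apply/setP => y; rewrite mem_comp connect_setU1 -/r.
case: ifP => Mz /=; last by rewrite orbF mem_comp.
apply/idP/idP => [/orP[Czy|//]|->]; last by rewrite orbT.
move: Mz; rewrite !mem_merged.
by case/orP => /connect_trans/(_ Czy)->; rewrite ?orbT.
Qed.

Lemma comps_setU1 : comps (j0 |: D0) = M |: ((comps D0 :\ Bx) :\ By).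
Proof.
apply/setP => B; rewrite in_setU1 !in_setD1 compsE.
apply/imsetP/idP => [[z _ ->]|].
  rewrite comp_setU1; case: ifPn => [_|]; first by rewrite eqxx.
  rewrite mem_merged negb_or comp_in_comps !eq_comp.
  by rewrite ![connect _ z _]connect_edge_sym => /andP[-> ->]; rewrite orbT.
case/orP => [/eqP-> | /and3P[nBy nBx /compsP[z Bz]]].
  by exists x0; rewrite ?inE // comp_setU1 mem_merged_x0.
exists z; rewrite ?inE // comp_setU1 ifN // mem_merged negb_or.
by move: nBx nBy; rewrite Bz !eq_comp ![connect _ z _]connect_edge_sym => -> ->.
Qed.

Lemma comps_setU1_connected : connect r x0 y0 -> comps (j0 |: D0) = comps D0.
Proof.
move=> Cxy; have ByBx : By = Bx by apply/eqP; rewrite eq_comp connect_edge_sym.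
have MBx : M = Bx by rewrite /M -/Bx -/By ByBx setUid.
by rewrite comps_setU1 ByBx setDDl setUid MBx setD1K // comp_in_comps.
Qed.

Lemma merged_notin_comps : M \notin (comps D0 :\ Bx) :\ By.
Proof.
rewrite !in_setD1; apply/negP => /and3P[_ nBx PM].
by move: nBx; rewrite (comps_mem PM mem_merged_x0) eqxx.
Qed.

Lemma nedges_from_setU1 B :
  j0 \notin D0 -> nedges_from (j0 |: D0) B = (x0 \in B) + nedges_from D0 B.
Proof. by move=> D0'j0; rewrite /nedges_from big_setU1. Qed.

Section Disconnected.
Hypothesis nCxy : ~~ connect r x0 y0.

Lemma disjoint_end_comps : [disjoint Bx & By].
Proof.
rewrite -setI_eq0; apply/eqP/setP => w; rewrite !inE.
apply/negbTE/andP => -[Cxw Cyw]; move/negP: nCxy; apply.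
by rewrite (connect_trans Cxw) // connect_edge_sym.
Qed.

Lemma nedges_from_merged : nedges_from D0 M = nedges_from D0 Bx + nedges_from D0 By.
Proof.
rewrite /nedges_from -big_split; apply: eq_bigr => j _ /=; rewrite in_setU.
by case: (boolP (src j \in Bx)) => // /(disjointFr disjoint_end_comps)->.
Qed.

Lemma card_merged : #|M| = #|Bx| + #|By|.
Proof. by rewrite cardsU (disjoint_setI0 disjoint_end_comps) cards0 subn0. Qed.

End Disconnected.
End AddEdge.

Lemma nedges_fromT B : nedges_from setT B = #|[set j | src j \in B]|.
Proof.
rewrite /nedges_from -sum1_card big_mkcond [RHS]big_mkcond.
by apply: eq_bigr => j _; rewrite !inE; case: (_ \in B).
Qed.

Lemma card_comp_le D B : B \in comps D -> #|B| <= nedges_from D B + 1.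
Proof.
elim/setU1_ind: D B => [|j0 D0 D0'j0 IH] B.
  by rewrite comps_set0 => /imsetP[z _ ->]; rewrite cards1 addnC.
rewrite nedges_from_setU1 //.
case: (boolP (connect (edge_rel D0) (src j0) (dst j0))) => [Cxy|nCxy].
  by rewrite comps_setU1_connected // => /IH; lia.
rewrite comps_setU1 in_setU1 => /orP[/eqP->|]; last first.
  by rewrite !in_setD1 => /and3P[_ _ /IH]; lia.
rewrite mem_merged_x0 add1n nedges_from_merged // card_merged //.
have := IH _ (comp_in_comps D0 (src j0)).
by have := IH _ (comp_in_comps D0 (dst j0)); lia.
Qed.

End Components.

Lemma sum_odd_perm_eq0 (R : pzRingType) n (G : 'S_n -> R) (t : 'S_n) :
  odd_perm t -> (forall s, G (t * s)%g = G s) ->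
  \sum_(s : 'S_n) (-1) ^+ odd_perm s * G s = 0.
Proof.
move=> odd_t Gt; rewrite (bigID (fun s => odd_perm s)) /= (reindex_inj (mulgI t)) /=.
rewrite (eq_big (fun s => ~~ odd_perm s) (fun s => - ((-1) ^+ odd_perm s * G s))).
- by rewrite sumrN addNr.
- by move=> s; rewrite odd_permM odd_t.
move=> s; rewrite odd_permM odd_t Gt /= => /negPf odd_s.
by rewrite odd_s expr1 expr0 mulN1r mul1r.
Qed.

Lemma block_permKV d n (s : 'S_d) : cancel (@block_perm d n s^-1) (@block_perm d n s).
Proof. by case=> x y; rewrite /block_perm /= permKV. Qed.

Lemma sum_ffun_at_indep (R : nmodType) (I S : finType) (H : S -> {ffun I -> S} -> R) j0 :
  (forall a (l l' : {ffun I -> S}), (forall j, j != j0 -> l j = l' j) -> H a l = H a l') ->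
  (\sum_(l : {ffun I -> S}) H (l j0) l) *+ #|S| = \sum_a \sum_(l : {ffun I -> S}) H a l.
Proof.
move=> H_indep.
have fibre a a' :
    \sum_(l : {ffun I -> S} | l j0 == a') H a l =
      \sum_(l : {ffun I -> S} | l j0 == a) H a l.
  pose swap (l : {ffun I -> S}) := [ffun j => if j == j0 then tperm a a' (l j0) else l j].
  have swapK : involutive swap.
    move=> l; apply/ffunP => j; rewrite !ffunE.
    by case: eqP => [->|//]; rewrite eqxx tpermK.
  rewrite (reindex_inj (inv_inj swapK)); apply: eq_big => [l|l _] /=.
    by rewrite ffunE eqxx -[X in _ == X](tpermL a a') (inj_eq perm_inj).
  by apply: H_indep => j /negbTE j'j0; rewrite ffunE j'j0.
have split_at (F : {ffun I -> S} -> R) :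
    \sum_l F l = \sum_a' \sum_(l : {ffun I -> S} | l j0 == a') F l.
  exact: partition_big.
rewrite split_at -sumrMnl; apply: eq_bigr => a _.
rewrite split_at (eq_bigr _ (fun a' _ => fibre a a')) sumr_const.
by congr (_ *+ _); apply: eq_bigr => l /eqP->.
Qed.

Definition copairing (k : pzSemiRingType) (A : comPzRingType) (eps : A -> k)
    (S : finType) (b b' : S -> A) :=
  forall u v, \sum_a eps (u * b a) * eps (b' a * v) = eps (u * v).

Section StateSum.
Variables (k : fieldType) (A : comPzRingType) (eps : {additive A -> k}).
Variables (S : finType) (b b' : S -> A).
Hypothesis eps_copairing : copairing eps b b'.
Hypothesis card_S_neq0 : (#|S|%:R : k) != 0.

Definition casimir := \sum_a b a * b' a.

Section Gluing.
Variables (V I : finType) (src dst : I -> V).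
Implicit Types (D : {set I}) (B : {set V}) (f : V -> A).
Local Notation edge_rel := (edge_rel src dst).
Local Notation comp := (comp src dst).
Local Notation comps := (comps src dst).
Local Notation nedges_from := (nedges_from src).

Definition end_factor x j a : A :=
  (if src j == x then b a else 1) * (if dst j == x then b' a else 1).

Definition state_sum D f : k :=
  \sum_(l : {ffun I -> S}) \prod_x eps (f x * \prod_(j in D) end_factor x j (l j)).

(* The exponent of [casimir] is the first Betti number of the component [B]
   (see [card_comp_le]): each independent cycle of glued circles adds a handle. *)
Definition comp_weight D f B : k :=
  eps (casimir ^+ (nedges_from D B + 1 - #|B|) * \prod_(x in B) f x).

Lemma prod_end_factor B j a :
  \prod_(x in B) end_factor x j a =
    (if src j \in B then b a else 1) * (if dst j \in B then b' a else 1).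
Proof.
have prod_if1 x0 (u : A) :
    \prod_(x in B) (if x0 == x then u else 1) = if x0 \in B then u else 1.
  case: ifPn => [Bx0|B'x0].
    rewrite (bigD1 x0) //= eqxx big1 ?mulr1 // => x /andP[_ /negPf].
    by rewrite eq_sym => ->.
  by apply: big1 => x Bx; case: eqP Bx => // <-; rewrite (negPf B'x0).
by rewrite big_split /= !prod_if1.
Qed.

Section AddEdge.
Variables (j0 : I) (D0 : {set I}).
Hypothesis D0'j0 : j0 \notin D0.
Let x0 := src j0.
Let y0 := dst j0.
Let Bx := comp D0 x0.
Let By := comp D0 y0.
Let glue f a x := f x * end_factor x j0 a.

Lemma state_sum_setU1 f : state_sum (j0 |: D0) f *+ #|S| = \sum_a state_sum D0 (glue f a).
Proof.
pose H a (l : {ffun I -> S}) :=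
  \prod_x eps (glue f a x * \prod_(j in D0) end_factor x j (l j)).
transitivity ((\sum_(l : {ffun I -> S}) H (l j0) l) *+ #|S|).
  congr (_ *+ _); apply: eq_bigr => l _; apply: eq_bigr => x _.
  by rewrite big_setU1 //= mulrA.
apply: sum_ffun_at_indep => a l l' Ell'; apply: eq_bigr => x _.
congr (eps (_ * _)); apply: eq_bigr => j D0j.
by rewrite Ell' //; apply: contraNneq D0'j0 => <-.
Qed.

Lemma comp_weight_glue f a B :
  comp_weight D0 (glue f a) B =
    eps (casimir ^+ (nedges_from D0 B + 1 - #|B|) * ((\prod_(x in B) f x) *
      ((if x0 \in B then b a else 1) * (if y0 \in B then b' a else 1)))).
Proof. by rewrite /comp_weight big_split /= prod_end_factor. Qed.

Lemma comp_weight_other f a B : B \in comps D0 -> B != Bx -> B != By ->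
  comp_weight D0 (glue f a) B = comp_weight (j0 |: D0) f B.
Proof.
move=> PB /(comps_memN PB) B'x0 /(comps_memN PB) B'y0.
rewrite comp_weight_glue (negPf B'x0) (negPf B'y0) !mulr1.
by rewrite /comp_weight nedges_from_setU1 // (negPf B'x0).
Qed.

Lemma glue_comps_connected f : connect (edge_rel D0) x0 y0 ->
  \sum_a \prod_(B in comps D0) comp_weight D0 (glue f a) B =
    \prod_(B in comps (j0 |: D0)) comp_weight (j0 |: D0) f B.
Proof.
move=> Cxy; have PBx : Bx \in comps D0 := comp_in_comps _ _ D0 x0.
have ByBx : By = Bx by apply/eqP; rewrite eq_comp connect_edge_sym.
rewrite comps_setU1_connected // (big_setD1 Bx PBx) /=.
have others a : \prod_(B in comps D0 :\ Bx) comp_weight D0 (glue f a) B =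
    \prod_(B in comps D0 :\ Bx) comp_weight (j0 |: D0) f B.
  apply: eq_bigr => B; rewrite in_setD1 => /andP[B'x PB].
  by apply: comp_weight_other; rewrite ?ByBx.
under eq_bigr do rewrite (big_setD1 Bx PBx) /= others.
rewrite -mulr_suml; congr (_ * _).
have Bxx0 : x0 \in Bx := comp_id _ _ D0 x0.
have Bxy0 : y0 \in Bx by rewrite -ByBx comp_id.
under eq_bigr do rewrite comp_weight_glue Bxx0 Bxy0.
rewrite -raddf_sum -!mulr_sumr /comp_weight nedges_from_setU1 // Bxx0 add1n.
have := card_comp_le PBx; rewrite -/Bx => le_Bx.
by rewrite subSn // exprSr mulrAC mulrA.
Qed.

Lemma glue_comps_disconnected f : ~~ connect (edge_rel D0) x0 y0 ->
  \sum_a \prod_(B in comps D0) comp_weight D0 (glue f a) B =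
    \prod_(B in comps (j0 |: D0)) comp_weight (j0 |: D0) f B.
Proof.
move=> nCxy; have PBx : Bx \in comps D0 := comp_in_comps _ _ D0 x0.
have Bxx0 : x0 \in Bx := comp_id _ _ D0 x0.
have Byy0 : y0 \in By := comp_id _ _ D0 y0.
have Bx'y0 : y0 \notin Bx by rewrite mem_comp.
have By'x0 : x0 \notin By by rewrite mem_comp connect_edge_sym.
have PBy : By \in comps D0 :\ Bx.
  by rewrite in_setD1 comp_in_comps eq_comp connect_edge_sym andbT.
rewrite comps_setU1 big_setU1 ?merged_notin_comps //=.
have others a : \prod_(B in (comps D0 :\ Bx) :\ By) comp_weight D0 (glue f a) B =
    \prod_(B in (comps D0 :\ Bx) :\ By) comp_weight (j0 |: D0) f B.
  apply: eq_bigr => B; rewrite !in_setD1 => /and3P[B'y B'x PB].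
  exact: comp_weight_other.
under eq_bigr do rewrite (big_setD1 Bx PBx) (big_setD1 By PBy) /= mulrA others.
rewrite -mulr_suml; congr (_ * _).
pose U := casimir ^+ (nedges_from D0 Bx + 1 - #|Bx|) * \prod_(x in Bx) f x.
pose W := casimir ^+ (nedges_from D0 By + 1 - #|By|) * \prod_(x in By) f x.
have glue_ends a : comp_weight D0 (glue f a) Bx * comp_weight D0 (glue f a) By =
    eps (U * b a) * eps (b' a * W).
  rewrite !comp_weight_glue Bxx0 (negPf Bx'y0) (negPf By'x0) Byy0 !mulr1 !mul1r.
  by rewrite [X in _ = _ * eps X]mulrC !mulrA.
under eq_bigr do rewrite glue_ends.
rewrite eps_copairing /comp_weight nedges_from_setU1 // mem_merged_x0.
have -> : \prod_(x in Bx :|: By) f x = (\prod_(x in Bx) f x) * \prod_(x in By) f x.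
  by rewrite -bigU ?disjoint_end_comps //; apply: eq_bigl => x; rewrite !inE.
rewrite nedges_from_merged // card_merged //.
have := card_comp_le PBx; have := card_comp_le (comp_in_comps src dst D0 y0).
rewrite -/Bx -/By => le_By le_Bx.
have -> : ((true + (nedges_from D0 Bx + nedges_from D0 By)) + 1 - (#|Bx| + #|By|) =
   (nedges_from D0 Bx + 1 - #|Bx|) + (nedges_from D0 By + 1 - #|By|))%N by lia.
by rewrite exprD mulrACA.
Qed.

Lemma glue_comps f :
  \sum_a \prod_(B in comps D0) comp_weight D0 (glue f a) B =
    \prod_(B in comps (j0 |: D0)) comp_weight (j0 |: D0) f B.
Proof.
have [Cxy | nCxy] := boolP (connect (edge_rel D0) x0 y0).
  exact: glue_comps_connected.
exact: glue_comps_disconnected.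
Qed.

End AddEdge.

Theorem state_sumE D f :
  state_sum D f = #|S|%:R ^+ #|~: D| * \prod_(B in comps D) comp_weight D f B.
Proof.
elim/setU1_ind: D f => [|j0 D0 D0'j0 IH] f.
  rewrite /state_sum comps_set0 big_imset /=; last by move=> x y _ _; apply: set1_inj.
  under eq_bigr do under eq_bigr do rewrite big_set0 mulr1.
  rewrite sumr_const card_ffun setC0 cardsT -natrX mulr_natl; congr (_ *+ _).
  apply: eq_big => [x|x _]; first by rewrite inE.
  by rewrite /comp_weight cards1 /nedges_from big_set0 big_set1 expr0 mul1r.
apply: (mulIf card_S_neq0); rewrite !mulr_natr state_sum_setU1 //.
rewrite (eq_bigr _ (fun a _ => IH _)) -mulr_sumr glue_comps //.
have -> : #|~: D0| = #|~: (j0 |: D0)|.+1.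
  by have := cardsC D0; have := cardsC (j0 |: D0); rewrite cardsU1 D0'j0; lia.
by rewrite exprSr mulrAC mulr_natr.
Qed.
End Gluing.

Let alpha g := eps (casimir ^+ g).

Lemma closure_eval_state_sum (I : finType) c (gen : 'I_c -> nat)
    (inp outp : I -> 'I_c) tau :
  closure_eval alpha gen inp outp tau =
    state_sum outp (inp \o tau) setT (fun x => casimir ^+ gen x).
Proof.
rewrite state_sumE setCT cards0 expr0 mul1r /closure_eval.
have -> : equivalence_partition (connect (glue_rel inp outp tau)) [set: 'I_c] =
    comps outp (inp \o tau) setT.
  apply: eq_imset => z; apply/setP => y; rewrite !inE; apply: eq_connect => x w.
  by apply: eq_existsb => j; rewrite in_setT.
apply: eq_bigr => B PB; rewrite /comp_weight prodrXr -exprD /comp_genus /alpha.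
have := card_comp_le PB; rewrite nedges_fromT.
set E := #|[set j | _]|; set g := (\sum_(x in B) gen x)%N => le_B.
by have -> : (g + E + 1 - #|B| = E + 1 - #|B| + g)%N by lia.
Qed.

Lemma state_sum_relabel (V I : finType) (outp inp : I -> V) (tau tau' : I -> I) f :
  cancel tau' tau ->
  state_sum outp (inp \o tau) setT f = \sum_(l : {ffun I -> S}) \prod_x
    eps (f x * ((\prod_j (if outp j == x then b (l j) else 1)) *
                 \prod_j (if inp j == x then b' (l (tau' j)) else 1))).
Proof.
move=> tauK; apply: eq_bigr => l _; apply: eq_bigr => x _; congr (eps (_ * _)).
rewrite (eq_bigl xpredT) => [|j]; last by rewrite in_setT.
rewrite big_split /=; congr (_ * _).
by rewrite (reindex_inj (can_inj tauK)) /=; apply: eq_bigr => j _; rewrite tauK.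
Qed.

Theorem casimir_pseudocharacter : pseudocharacter alpha.
Proof.
move=> n; exists #|{ffun 'I_n -> S}|; set d := #|{ffun 'I_n -> S}| => c gen inp outp.
rewrite /antisym_trace.
under eq_bigr => s _.
  rewrite closure_eval_state_sum (state_sum_relabel _ _ _ (block_permKV s)) mulr_sumr.
  over.
rewrite exchange_big /=; apply: big1 => l _.
pose blocks (i : 'I_d.+1) := [ffun j : 'I_n => l (i, j)].
have /injectivePn[i1 [i2 i12 Ei12]] : ~~ injectiveb blocks.
  by apply/injectiveP => /leq_card; rewrite card_ord ltnn.
apply: (sum_odd_perm_eq0 (t := tperm i1 i2)); first by rewrite odd_tperm i12.
move=> s; apply: eq_bigr => x _; congr (eps (_ * (_ * _))); apply: eq_bigr => -[i j] _.
rewrite /block_perm /= invMg tpermV permM.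
have := congr1 (fun F : {ffun 'I_n -> S} => F j) Ei12; rewrite !ffunE => El.
by case: tpermP => [->|->|//]; rewrite El.
Qed.

End StateSum.

Section PairCopairing.
Variables (k : fieldType) (A1 A2 : comPzRingType).
Variables (eps1 : {additive A1 -> k}) (eps2 : {additive A2 -> k}).

Definition eps_pair (u : A1 * A2) := eps1 u.1 + eps2 u.2.

Lemma eps_pair_is_nmod_morphism : nmod_morphism eps_pair.
Proof.
split=> [|u v]; first by rewrite /eps_pair !raddf0 addr0.
by rewrite /eps_pair !raddfD addrACA.
Qed.

HB.instance Definition _ :=
  GRing.isNmodMorphism.Build (A1 * A2)%type k eps_pair eps_pair_is_nmod_morphism.

Lemma eps_pairX u g : eps_pair (u ^+ g) = eps1 (u.1 ^+ g) + eps2 (u.2 ^+ g).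
Proof. by rewrite /eps_pair !rmorphXn. Qed.

Definition basis_pair (S1 S2 : finType) (c1 : S1 -> A1) (c2 : S2 -> A2) (a : S1 + S2) :=
  match a with inl a1 => (c1 a1, 0) | inr a2 => (0, c2 a2) end.

Variables (S1 S2 : finType) (b1 b1' : S1 -> A1) (b2 b2' : S2 -> A2).

Lemma copairing_pair : copairing eps1 b1 b1' -> copairing eps2 b2 b2' ->
  copairing eps_pair (basis_pair b1 b2) (basis_pair b1' b2').
Proof.
move=> copairing1 copairing2 u v; rewrite big_sumType /= /eps_pair /=.
rewrite -(copairing1 u.1 v.1) -(copairing2 u.2 v.2); congr (_ + _); apply: eq_bigr => a _.
  by rewrite mulr0 mul0r !raddf0 !addr0.
by rewrite mulr0 mul0r !raddf0 !add0r.
Qed.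

Lemma casimir_pair :
  casimir (basis_pair b1 b2) (basis_pair b1' b2') = (casimir b1 b1', casimir b2 b2').
Proof.
have sum_pair (J : finType) (F : J -> A1 * A2) :
    \sum_j F j = (\sum_j (F j).1, \sum_j (F j).2).
  by rewrite -(raddf_sum fst) -(raddf_sum snd); case: (\sum_j F j).
rewrite /casimir sum_pair !big_sumType /=.
by rewrite !mulr0 !big1_eq addr0 add0r.
Qed.

End PairCopairing.

Section PolyCopairing.
Variables (k : fieldType) (mu : k) (n : nat).

Definition eps_poly (p : {poly k}) := mu * p`_0 + p`_(n.+1).

Lemma eps_poly_is_nmod_morphism : nmod_morphism eps_poly.
Proof.
split=> [|p q]; first by rewrite /eps_poly !coef0 mulr0 addr0.
by rewrite /eps_poly !coefD mulrDr addrACA.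
Qed.

HB.instance Definition _ :=
  GRing.isNmodMorphism.Build {poly k} k eps_poly eps_poly_is_nmod_morphism.

Definition monomial (j : 'I_n.+2) : {poly k} := 'X^j.

(* For [j = n.+1], the term [- mu *: 'X^(n.+1)] cancels the [mu * p`_0] part
   of [eps_poly]. *)
Definition dual_monomial (j : 'I_n.+2) : {poly k} :=
  if (j < n.+1)%N then 'X^(n.+1 - j) else 1 - mu *: 'X^(n.+1).

Lemma eps_poly_dual_monomial j p : eps_poly (dual_monomial j * p) = p`_j.
Proof.
rewrite /dual_monomial /eps_poly; case: ifP => lt_j_n1.
  rewrite !coefXnM.
  have [-> -> ->] : [/\ (0 < n.+1 - j), (n.+1 < n.+1 - j) = false & n.+1 - (n.+1 - j) = j]%N.
    by split; lia.
  by rewrite mulr0 add0r.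
have -> : (j : nat) = n.+1 by have := ltn_ord j; lia.
rewrite mulrBl mul1r -scalerAl !coefB !coefZ !coefXnM ltnn subnn /=; ring.
Qed.

Lemma copairing_poly : copairing eps_poly monomial dual_monomial.
Proof.
move=> u p; under eq_bigr do rewrite eps_poly_dual_monomial.
rewrite /eps_poly /monomial !coefMr big_ord1 [LHS]big_ord_recl [in RHS]big_ord_recl /=.
rewrite (eq_bigr (fun j : 'I_n.+1 => u`_(n.+1 - bump 0 j) * p`_(bump 0 j))) => [|j _].
  by rewrite !coefMXn /= !subn0; ring.
rewrite !coefMXn /bump /= (_ : n.+1 < 1 + j = false)%N ?mulr0 ?add0r //.
by have := ltn_ord j; lia.
Qed.

Lemma casimir_poly :
  casimir monomial dual_monomial = 'X^(n.+1) * ((n.+2)%:R - mu *: 'X^(n.+1)).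
Proof.
rewrite /casimir big_ord_recr /= /monomial /dual_monomial /= ltnn.
rewrite (eq_bigr (fun _ => 'X^(n.+1))) => [|j _]; last first.
  by rewrite ltn_ord -exprD subnKC // ltnW.
by rewrite sumr_const card_ord -mul_polyC; ring.
Qed.

Lemma eps_poly_casimirX g :
  eps_poly (casimir monomial dual_monomial ^+ g) =
    (if g == 0%N then mu else 0) + (if g == 1%N then (n.+2)%:R else 0).
Proof.
rewrite casimir_poly; case: g => [|[|g]] /=.
- by rewrite /eps_poly expr0 !coef1 /= mulr1 addr0.
- rewrite /eps_poly expr1 !coefXnM ltnn subnn /= coefB coefZ coefXn coefMn coef1 /=.
  by rewrite mulr0 subr0 !add0r.
rewrite exprMn -exprM /eps_poly !coefXnM muln_gt0 /= ltn_Pmulr //=.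
by rewrite mulr0 add0r.
Qed.

End PolyCopairing.

HB.instance Definition _ (T : finType) (R : comPzRingType) :=
  GRing.PzSemiRing_hasCommutativeMul.Build {ffun T -> R} (@ffun_mulC T R).

Section PointCopairing.
Variables (k : fieldType) (T : finType) (w v : T -> k).
Hypothesis v_inv_w : forall t, w t != 0 -> v t = (w t)^-1.

Definition eps_points (f : {ffun T -> k}) := \sum_t w t * f t.

Lemma eps_points_is_nmod_morphism : nmod_morphism eps_points.
Proof.
split=> [|f g]; first by rewrite /eps_points big1 // => t _; rewrite ffunE mulr0.
by rewrite /eps_points -big_split; apply: eq_bigr => t _; rewrite ffunE mulrDr.
Qed.

HB.instance Definition _ :=
  GRing.isNmodMorphism.Build {ffun T -> k} k eps_points eps_points_is_nmod_morphism.

Definition point_unit t : {ffun T -> k} := [ffun t' => (t' == t)%:R].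

Definition dual_point_unit t : {ffun T -> k} := [ffun t' => (t' == t)%:R * v t].

Lemma eps_points_unit f t : eps_points (f * point_unit t) = w t * f t.
Proof.
rewrite /eps_points (bigD1 t) //= !ffunE eqxx mulr1 big1 ?addr0 // => t' /negPf t't.
by rewrite !ffunE t't !mulr0.
Qed.

Lemma eps_points_dual_unit f t : eps_points (dual_point_unit t * f) = w t * v t * f t.
Proof.
rewrite /eps_points (bigD1 t) //= !ffunE eqxx mul1r mulrA big1 ?addr0 // => t' /negPf t't.
by rewrite !ffunE t't !mul0r mulr0.
Qed.

Lemma copairing_points : copairing eps_points point_unit dual_point_unit.
Proof.
move=> f g; apply: eq_bigr => t _; rewrite eps_points_unit eps_points_dual_unit ffunE.
have [-> | wt_neq0] := eqVneq (w t) 0; first by rewrite !mul0r.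
by rewrite v_inv_w // mulfV // mul1r mulrA.
Qed.

Lemma casimir_points : casimir point_unit dual_point_unit = [ffun t => v t].
Proof.
apply/ffunP => t; rewrite /casimir sum_ffunE (bigD1 t) //= !ffunE eqxx !mul1r.
by rewrite big1 ?addr0 // => t' /negPf t't; rewrite !ffunE eq_sym t't !mul0r.
Qed.

Lemma eps_points_casimirX g :
  eps_points (casimir point_unit dual_point_unit ^+ g) = \sum_t w t * v t ^+ g.
Proof.
rewrite casimir_points; apply: eq_bigr => t _; congr (_ * _).
by elim: g => [|g IHg]; rewrite ?expr0 ?ffunE // !exprS ffunE IHg ffunE.
Qed.

End PointCopairing.

Lemma sum_pairs_ltn (R : nmodType) s (ms : 'I_s -> nat) (F : 'I_s -> R) :
  \sum_(t : 'I_s * 'I_(\sum_i ms i)) (if (t.2 < ms t.1)%N then F t.1 else 0) =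
    \sum_i F i *+ ms i.
Proof.
pose M := (\sum_i ms i)%N.
rewrite -(pair_big xpredT xpredT (fun i (j : 'I_M) => if (j < ms i)%N then F i else 0)) /=.
apply: eq_bigr => i _; rewrite -big_mkcond /=.
rewrite -(big_ord_widen _ (fun _ => F i)) ?sumr_const ?card_ord //.
by rewrite /M (bigD1 i) //= leq_addr.
Qed.

Theorem mainTheorem12 (k : closedFieldType) (hk : [pchar k] =i pred0)
  (mu : k) (m : nat) (hm : (2 <= m)%N) (s : nat) (ms : 'I_s -> nat)
  (lam : 'I_s -> k) (hms : forall i, (1 <= ms i)%N) (hlam : forall i, lam i != 0) :
  exists alpha : nat -> k,
    pseudocharacter alpha /\
    forall g : nat,
      alpha g = (if g == 0%N then mu else 0) + (if g == 1%N then m%:R else 0)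
                + \sum_(i < s) (ms i)%:R * (lam i)^-1 * (lam i) ^+ g.
Proof.
case: m hm => [|[|n]] // _.
pose T := ('I_s * 'I_(\sum_i ms i))%type.
pose w (t : T) := if (t.2 < ms t.1)%N then (lam t.1)^-1 else 0.
pose v (t : T) := lam t.1.
have v_inv_w t : w t != 0 -> v t = (w t)^-1.
  by rewrite /w /v; case: ifP; rewrite ?eqxx // invrK.
pose eps := eps_pair (eps_poly mu n) (eps_points w).
pose b := basis_pair (@monomial k n) (@point_unit k T).
pose b' := basis_pair (@dual_monomial k mu n) (dual_point_unit v).
exists (fun g => eps (casimir b b' ^+ g)); split.
  apply: casimir_pseudocharacter.
    exact: copairing_pair (copairing_poly mu n) (copairing_points v_inv_w).
  by move/pcharf0P: hk => ->; rewrite card_sum card_ord.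
move=> g; rewrite /eps /b /b' casimir_pair eps_pairX /=.
rewrite eps_poly_casimirX eps_points_casimirX.
congr (_ + _); under [RHS]eq_bigr do rewrite -mulrA mulr_natl.
by rewrite -sum_pairs_ltn; apply: eq_bigr => t _; rewrite /w /v; case: ifP; rewrite ?mul0r.
Qed.
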